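(* Let $r\in\mathbb N_0$ and suppose Assumption (A1) holds with $k=0$. Then there is a constant $\kappa_r>0$, independent of $\tau_n$ and $n$, such that $$\sup_{t\in I_n}\|\varphi(t)\|\le\kappa_r\sum_{i=0}^r\Big\|\mathscr I_n\big[\varphi'(t)(1+T_n^{-1}(t))^i\big]+\delta_{0,i}\varphi(t_{n-1}^+)\Big\|\qquad\forall\varphi\in P_r(I_n,\mathbb R^d).$$
   Context: Mesh: $t_0<t_1<\dots<t_N$, $I_n=(t_{n-1},t_n]$, $\tau_n=t_n-t_{n-1}\le1$; $v(t_n^\pm)$ denote one-sided limits. $T_n(\hat t)=\frac{t_n+t_{n-1}}{2}+\frac{\tau_n}{2}\hat t$. $\|\cdot\|$ is the Euclidean norm on $\mathbb R^d$; $P_s$ denotes polynomials of degree at most $s$; $\delta_{i,j}$ is the Kronecker symbol. $\widehat{\mathscr I}$ is a linear functional (reference integrator) on $C^{k_{\mathscr I}}([-1,1])$ with local version $\mathscr I_n[\varphi]=\frac{\tau_n}{2}\widehat{\mathscr I}[\varphi\circ T_n]$, acting componentwise. Assumption (A1) for $k=0$: whenever $\hat\psi\in P_{r-1}([-1,1])$ satisfies $\widehat{\mathscr I}[(1+\hat t)\hat\psi\hat\varphi]=0$ for all $\hat\varphi\in P_{r-1}([-1,1])$, then $\hat\psi\equiv0$. *)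

From HB Require Import structures.
From mathcomp Require Import all_boot all_order all_algebra.
From mathcomp Require Import reals.
Set Implicit Arguments. Unset Strict Implicit. Unset Printing Implicit Defensive.
Import Order.TTheory GRing.Theory Num.Theory.
Local Open Scope ring_scope.

Section Defs.
Variable R : realType.

Definition enorm (d : nat) (v : 'I_d -> R) : R :=
  Num.sqrt (\sum_(j < d) v j ^+ 2).

(* T_n(that) = (t_n + t_{n-1})/2 + tau_n/2 * that, as a polynomial in that,
   with a = t_{n-1}, b = t_n *)
Definition Tpoly (a b : R) : {poly R} :=
  ((b + a) / 2)%:P + ((b - a) / 2)%:P * 'X.

Definition Tinvpoly (a b : R) : {poly R} :=
  (2 / (b - a))%:P * 'X - ((b + a) / (b - a))%:P.

(* local integrator I_n[phi] = tau_n/2 * Ihat[phi o T_n] (on polynomials) *)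
Definition Iloc (Ihat : {poly R} -> R) (a b : R) (q : {poly R}) : R :=
  (b - a) / 2 * Ihat (q \Po Tpoly a b).

(* Assumption (A1) with k = 0, for degree r: polynomials of degree <= r-1
   are those of size <= r (for r = 0 only the zero polynomial). *)
Definition A1_k0 (Ihat : {poly R} -> R) (r : nat) : Prop :=
  forall psi : {poly R}, (size psi <= r)%N ->
    (forall phi : {poly R}, (size phi <= r)%N ->
        Ihat (('X + 1) * psi * phi) = 0) ->
    psi = 0.

Definition is_linear_functional (Ihat : {poly R} -> R) : Prop :=
  (forall p q, Ihat (p + q) = Ihat p + Ihat q) /\
  (forall (c : R) p, Ihat (c *: p) = c * Ihat p).
End Defs.

(* Pull everything back to the reference interval [-1, 1] through the affine
   map T = T_n.  On the reference interval consider the r + 1 linear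
   functionals
       L_i(p) = Ihat[p' (1 + X)^i] + delta_{i,0} p(-1),     0 <= i <= r,
   on the space P_r of polynomials of degree at most r.  Assumption (A1)
   makes them jointly injective: L_i(p) = 0 for 1 <= i <= r forces p' = 0,
   since the polynomials (1 + X)^(i-1) span P_(r-1), and then L_0(p) = p(-1)
   forces p = 0.  Hence the (r+1) x (r+1) matrix (L_i(X^k))_{k,i} is
   invertible, which bounds the coefficients of p, hence sup_{[-1,1]} |p|,
   by a fixed multiple of sum_i |L_i(p)|.  Finally, for phi in P_r(I_n),
   L_i(phi o T) is exactly the i-th term of the right-hand side, and the
   vector-valued statement follows componentwise, comparing the Euclidean
   norm with the l1 norm (which costs a factor d). *)

From HB Require Import structures.
From mathcomp Require Import all_boot all_order all_algebra.
From mathcomp Require Import reals ring lra.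
Import Order.TTheory GRing.Theory Num.Theory.
Local Open Scope ring_scope.

Lemma ler_sum_term {R : numDomainType} {n : nat} (F : 'I_n -> R) (j : 'I_n) :
  (forall i, 0 <= F i) -> F j <= \sum_(i < n) F i.
Proof. by move=> F_ge0; rewrite (bigD1 j) //= lerDl sumr_ge0. Qed.

Lemma sum_sqr_le_sqr_sum {R : realDomainType} {n : nat} (F : 'I_n -> R) :
  (forall i, 0 <= F i) -> \sum_(i < n) F i ^+ 2 <= (\sum_(i < n) F i) ^+ 2.
Proof.
elim: n F => [|n IH] F F_ge0; first by rewrite !big_ord0 expr0n.
rewrite !big_ord_recr /=.
have IHF := IH (fun i => F (widen_ord (leqnSn n) i)) (fun i => F_ge0 _).
have S_ge0 : 0 <= \sum_(i < n) F (widen_ord (leqnSn n) i) by exact: sumr_ge0.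
have := F_ge0 ord_max; move: IHF S_ge0.
set S := \sum_(i < n) _; set Q := \sum_(i < n) _; set x := F ord_max.
by rewrite !expr2 => *; nra.
Qed.

Lemma abs_le_enorm {R : realType} {d : nat} (v : 'I_d -> R) (j : 'I_d) :
  `|v j| <= enorm v.
Proof.
rewrite /enorm -sqrtr_sqr ler_sqrt; last by apply: sumr_ge0 => i _; exact: sqr_ge0.
by apply: (ler_sum_term (fun i => v i ^+ 2)) => i; exact: sqr_ge0.
Qed.

Lemma enorm_le_l1 {R : realType} {d : nat} (v : 'I_d -> R) :
  enorm v <= \sum_(j < d) `|v j|.
Proof.
have l1_ge0 : 0 <= \sum_(j < d) `|v j| by exact: sumr_ge0.
rewrite /enorm -(ger0_norm l1_ge0) -sqrtr_sqr ler_sqrt; last exact: sqr_ge0.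
rewrite (eq_bigr (fun j => `|v j| ^+ 2)) => [|j _]; last by rewrite real_normK ?num_real.
by apply: sum_sqr_le_sqr_sum => j; exact: normr_ge0.
Qed.

Lemma l1_le_enorm {R : realType} {d : nat} (v : 'I_d -> R) :
  \sum_(j < d) `|v j| <= d%:R * enorm v.
Proof.
apply: le_trans (_ : \sum_(j < d) enorm v <= _); first by apply: ler_sum => j _; exact: abs_le_enorm.
by rewrite sumr_const card_ord mulr_natl.
Qed.

Lemma norm_horner_le_coef {R : numDomainType} {p : {poly R}} {n : nat} {s : R} :
  (size p <= n)%N -> `|s| <= 1 -> `|p.[s]| <= \sum_(k < n) `|p`_k|.
Proof.
move=> size_p s_le1; rewrite (horner_coef_wide _ size_p).
apply: le_trans (ler_norm_sum _ _ _) _; apply: ler_sum => k _.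
rewrite normrM normrX ler_piMr ?normr_ge0 //; exact: exprn_ile1.
Qed.

Section ReferenceFunctionals.
Set Implicit Arguments. Unset Strict Implicit.
Variables (R : realType) (Ihat : {poly R} -> R).
Hypothesis Ihat_lin : is_linear_functional Ihat.

Lemma Ihat0 : Ihat 0 = 0.
Proof. by rewrite -(scale0r 0) (proj2 Ihat_lin) mul0r. Qed.

Lemma Ihat_sum (I : Type) (s : seq I) (P : pred I) (F : I -> {poly R}) :
  Ihat (\sum_(i <- s | P i) F i) = \sum_(i <- s | P i) Ihat (F i).
Proof. exact: (big_morph Ihat (proj1 Ihat_lin) Ihat0). Qed.

Definition refL (i : nat) (p : {poly R}) : R :=
  Ihat (p^`() * (1 + 'X) ^+ i) + (i == 0)%:R * p.[-1].

Lemma refL_lincomb (i n : nat) (c : 'I_n -> R) (F : 'I_n -> {poly R}) :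
  refL i (\sum_(k < n) c k *: F k) = \sum_(k < n) c k * refL i (F k).
Proof.
rewrite /refL raddf_sum big_distrl /= horner_sum mulr_sumr Ihat_sum -big_split.
apply: eq_bigr => k _ /=.
by rewrite derivZ -scalerAl (proj2 Ihat_lin) hornerZ mulrDr mulrCA.
Qed.

Variable r : nat.
Hypothesis A1 : A1_k0 Ihat r.

(* (A1): the L_i with 1 <= i <= r annihilate only polynomials with p' = 0,
   because the (1 + X)^(i-1) span the test space P_(r-1). *)
Lemma refL_deriv_eq0 (p : {poly R}) : (size p <= r.+1)%N ->
  (forall i, (0 < i <= r)%N -> refL i p = 0) -> p^`() = 0.
Proof.
move=> size_p refL_p0; apply: A1.
  have [->|p_neq0] := eqVneq p 0; first by rewrite deriv0 size_poly0.
  by rewrite -ltnS (leq_trans (lt_size_deriv p_neq0)).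
move=> phi size_phi.
pose u := phi \Po ('X + (-1)%:P).
have size_u : (size u <= r)%N by rewrite size_comp_poly2 // size_XaddC.
have phi_u : phi = u \Po ('X + 1).
  by rewrite /u -[X in 'X + X]opprK -polyC1 -polyCN comp_polyXaddC_K.
rewrite phi_u comp_polyE mulr_sumr Ihat_sum big1 // => j _.
rewrite -scalerAr (proj2 Ihat_lin).
have /refL_p0 : (0 < j.+1 <= r)%N by rewrite /= (leq_trans _ size_u).
by rewrite /refL mul0r addr0 exprS mulrA [_ * p^`()]mulrC addrC => ->; rewrite mulr0.
Qed.

Lemma refL_inj (p : {poly R}) : (size p <= r.+1)%N ->
  (forall i, (i <= r)%N -> refL i p = 0) -> p = 0.
Proof.
move=> size_p refL_p0.
have dp0 : p^`() = 0.
  by apply: refL_deriv_eq0 => // i /andP[_]; exact: refL_p0.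
have p_const : p = (p`_0)%:P.
  apply/polyP => -[|k]; rewrite coefC //=.
  by have /eqP := coef_deriv p k; rewrite dp0 coef0 eq_sym mulrn_eq0 => /eqP.
by have := refL_p0 0%N isT; rewrite /refL dp0 mul0r Ihat0 add0r mul1r p_const hornerC => ->.
Qed.

Definition refLmx : 'M[R]_(r.+1) := \matrix_(k, i) refL i 'X^k.
Definition poly_of_row (c : 'rV[R]_(r.+1)) : {poly R} := \poly_(k < r.+1) c 0 (inord k).

Lemma refLmx_row (c : 'rV[R]_(r.+1)) (i : 'I_r.+1) :
  (c *m refLmx) 0 i = refL i (poly_of_row c).
Proof.
rewrite /poly_of_row poly_def (refL_lincomb i (fun k => c 0 (inord k)) (fun k => 'X^k)).
by rewrite !mxE; apply: eq_bigr => k _; rewrite !mxE inord_val.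
Qed.

(* Injectivity of the L_i on P_r makes the matrix invertible. *)
Lemma refLmx_unit : refLmx \in unitmx.
Proof.
rewrite unitmxE unitfE; apply/negP => /det0P [c /negP c_neq0 c_ker]; apply: c_neq0.
have pc0 : poly_of_row c = 0.
  apply: refL_inj; first exact: size_poly.
  by move=> i ir; have := refLmx_row c (Ordinal (ir : (i < r.+1)%N)); rewrite c_ker mxE.
apply/eqP/rowP => k; have := congr1 (fun q : {poly R} => q`_k) pc0.
by rewrite coef_poly ltn_ord inord_val coef0 !mxE.
Qed.

(* Inverting the matrix bounds every coefficient of p in P_r by the data. *)
Lemma coef_le_refL : exists B : R, 0 <= B /\
  forall p : {poly R}, (size p <= r.+1)%N -> forall k : 'I_r.+1,
    `|p`_k| <= B * \sum_(i < r.+1) `|refL i p|.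
Proof.
pose M := invmx refLmx.
pose B := \sum_(l < r.+1) \sum_(k < r.+1) `|M l k|.
have entry_le l k : `|M l k| <= B.
  apply: le_trans (ler_sum_term (fun k => `|M l k|) k _) _ => [k'|]; first exact: normr_ge0.
  by apply: (ler_sum_term (fun l => \sum_(k < r.+1) `|M l k|)) => l'; exact: sumr_ge0.
exists B; split; first by do 2!apply: sumr_ge0 => ? _.
move=> p size_p k; pose c : 'rV[R]_(r.+1) := \row_k p`_k.
have p_row : p = poly_of_row c.
  apply/polyP => j; rewrite coef_poly; case: ltnP => hj; first by rewrite mxE inordK.
  by rewrite nth_default // (leq_trans size_p hj).
have -> : p`_k = ((c *m refLmx) *m M) 0 k by rewrite mulmxK ?refLmx_unit // mxE.
rewrite mxE (le_trans (ler_norm_sum _ _ _)) // mulr_sumr.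
apply: ler_sum => i _; rewrite normrM refLmx_row -p_row mulrC.
by rewrite ler_wpM2r ?normr_ge0.
Qed.

Lemma reference_bound : exists K : R, 0 < K /\
  forall p : {poly R}, (size p <= r.+1)%N -> forall s : R, `|s| <= 1 ->
    `|p.[s]| <= K * \sum_(i < r.+1) `|refL i p|.
Proof.
have [B [B_ge0 coef_le]] := coef_le_refL.
exists ((r.+1)%:R * B + 1); split; first by rewrite ltr_wpDl ?mulr_ge0.
move=> p size_p s s_le1.
have data_ge0 : 0 <= \sum_(i < r.+1) `|refL i p| by exact: sumr_ge0.
apply: le_trans (norm_horner_le_coef size_p s_le1) _.
apply: le_trans (_ : \sum_(k < r.+1) B * \sum_(i < r.+1) `|refL i p| <= _).
  by apply: ler_sum => k _; exact: coef_le.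
by rewrite sumr_const card_ord mulrDl mul1r -mulrA mulr_natl lerDl.
Qed.

End ReferenceFunctionals.

Section AffineMap.
Set Implicit Arguments. Unset Strict Implicit.
Variables (R : realType) (a b : R).
Hypothesis a_lt_b : a < b.

Let ba_neq0 : b - a != 0. Proof. by rewrite subr_eq0 gt_eqF. Qed.

Lemma Tinvpoly_comp_Tpoly : Tinvpoly a b \Po Tpoly a b = 'X.
Proof.
rewrite /Tinvpoly /Tpoly comp_polyB comp_polyM !comp_polyC comp_polyX.
rewrite mulrDr mulrA -!polyCM.
have -> : 2 / (b - a) * ((b + a) / 2) = (b + a) / (b - a) by field.
have -> : 2 / (b - a) * ((b - a) / 2) = 1 by field.
by rewrite polyC1 mul1r [X in X - _]addrC addrK.
Qed.

Lemma Tpoly_Tinvpoly (t : R) : (Tpoly a b).[(Tinvpoly a b).[t]] = t.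
Proof. by rewrite /Tpoly /Tinvpoly !hornerE; field. Qed.

Lemma Tpoly_m1 : (Tpoly a b).[-1] = a.
Proof. by rewrite /Tpoly !hornerE; field. Qed.

Lemma deriv_Tpoly : (Tpoly a b)^`() = ((b - a) / 2)%:P.
Proof. by rewrite /Tpoly derivD derivC add0r mul_polyC derivZ derivX alg_polyC. Qed.

Lemma size_comp_Tpoly (p : {poly R}) : size (p \Po Tpoly a b) = size p.
Proof.
rewrite size_comp_poly2 //.
rewrite /Tpoly addrC mul_polyC -mul_polyC size_MXaddC polyC_eq0.
by rewrite mulf_eq0 invr_eq0 (negbTE ba_neq0) pnatr_eq0 /= size_polyC mulf_neq0 ?invr_eq0 ?pnatr_eq0.
Qed.

Lemma norm_Tinvpoly_le1 (t : R) : a <= t -> t <= b -> `|(Tinvpoly a b).[t]| <= 1.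
Proof.
move=> a_le_t t_le_b; have ba_gt0 : 0 < b - a by rewrite subr_gt0.
rewrite /Tinvpoly !hornerE.
have -> : 2 / (b - a) * t - (b + a) / (b - a) = (2 * t - (b + a)) / (b - a) by field.
by rewrite ler_norml ler_pdivlMr // ler_pdivrMr //; apply/andP; split; lra.
Qed.

Lemma refL_comp_Tpoly (Ihat : {poly R} -> R) (p : {poly R}) (i : nat) :
  is_linear_functional Ihat ->
  refL Ihat i (p \Po Tpoly a b) =
    Iloc Ihat a b (p^`() * (1 + Tinvpoly a b) ^+ i) + (i == 0)%:R * p.[a].
Proof.
move=> Ihat_lin; rewrite /refL /Iloc horner_comp Tpoly_m1; congr (_ + _).
rewrite comp_polyM rmorphXn rmorphD rmorph1 /= Tinvpoly_comp_Tpoly deriv_comp deriv_Tpoly.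
by rewrite -(proj2 Ihat_lin); congr Ihat; rewrite -mul_polyC; ring.
Qed.

End AffineMap.

Theorem mainTheorem5 (R : realType) (r d : nat) (Ihat : {poly R} -> R) :
  is_linear_functional Ihat ->
  A1_k0 Ihat r ->
  exists kappa : R, 0 < kappa /\
    forall (a b : R), a < b -> b - a <= 1 ->
    forall phi : 'I_d -> {poly R}, (forall j, (size (phi j) <= r.+1)%N) ->
    forall t : R, a < t -> t <= b ->
      enorm (fun j => (phi j).[t]) <=
      kappa * \sum_(i < r.+1)
        enorm (fun j => Iloc Ihat a b ((phi j)^`() * (1 + Tinvpoly a b) ^+ i)
                        + (nat_of_ord i == 0%N)%:R * (phi j).[a]).
Proof.
move=> Ihat_lin A1.
have [K [K_gt0 refK]] := reference_bound Ihat_lin A1.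
exists (K * (d.+1)%:R); split; first by rewrite mulr_gt0 ?ltr0n.
move=> a b a_lt_b _ phi size_phi t a_lt_t t_le_b.
pose data (i : 'I_r.+1) (j : 'I_d) :=
  Iloc Ihat a b ((phi j)^`() * (1 + Tinvpoly a b) ^+ i) + (nat_of_ord i == 0%N)%:R * (phi j).[a].
(* Componentwise reference estimate at s = T^{-1}(t), which lies in [-1, 1]. *)
have comp_le j : `|(phi j).[t]| <= K * \sum_(i < r.+1) `|data i j|.
  rewrite -{1}(Tpoly_Tinvpoly a_lt_b t) -horner_comp.
  under eq_bigr => i _ do rewrite /data -(refL_comp_Tpoly a_lt_b _ _ Ihat_lin).
  apply: refK; first by rewrite size_comp_Tpoly.
  exact: norm_Tinvpoly_le1 (ltW a_lt_t) t_le_b.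
change (enorm (fun j => (phi j).[t]) <=
  K * (d.+1)%:R * \sum_(i < r.+1) enorm (data i)).
apply: le_trans (enorm_le_l1 _) _.
apply: le_trans (ler_sum _ (fun j _ => comp_le j)) _.
rewrite -mulr_sumr exchange_big -mulrA; apply: ler_wpM2l; first exact: ltW.
rewrite mulr_sumr; apply: ler_sum => i _; apply: le_trans (l1_le_enorm (data i)) _.
by rewrite ler_wpM2r ?ler_nat // /enorm sqrtr_ge0.
Qed.
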